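(* Let $w\ge5$, $t\in[2,w-2]$ and $\tilde h>2w^3$ be integers, and let $n'=\tilde h(w-1)$. Let $\{a_0=0,a_1,\dots,a_{w-2}\}$ be a $(\tilde h,w-1)$ modular Golomb ruler, with each $a_s$ represented by an integer in $[0,\tilde h-1]$. Define vectors in $\{0,1,2\}^{\mathbb Z_{n'}}$ (positions indexed by $\mathbb Z_{n'}$, all arithmetic mod $n'$) as follows. (1) For $i\in[0,t-2]$ and $j\in[0,\tilde h-1]$, $\mathbf a_{i,j}$ has support $\{(a_s+j)(w-1)+i: s\in[0,w-2]\}$, with position $(a_{w-2}+j)(w-1)+i$ having value $2$ and all other support positions value $1$. (2) For $i\in[0,w-t-1]$ and $j\in[0,\tilde h-1]$, $\mathbf b_{i,j}$ has support $\{(si+j)(w-1)+s-1: s\in[1,w-1]\}$, with position $((t+i)i+j)(w-1)+(t+i-1)$ having value $2$ and all other support positions value $1$. Let $\mathcal H=\{\mathbf a_{i,j}\}\cup\{\mathbf b_{i,j}\}$. Then $\mathcal H$ is an $(n',2w-2,w)_3$ code. Moreover, exactly $\tilde h(w-t)$ positions $v\in\mathbb Z_{n'}$ lie in the supports of exactly $w-t$ codewords of $\mathcal H$, and every other position lies in the supports of exactly $2w-t-1$ codewords of $\mathcal H$.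
   Context: An $(m,k)$ modular Golomb ruler is a set of $k$ elements of $\mathbb Z_m$ whose pairwise differences $a_i-a_j$ ($i\ne j$) in $\mathbb Z_m$ are nonzero and pairwise distinct. The $\ell_1$-distance between ternary vectors $u,v$ is $\sum|u_i-v_i|$ and the $\ell_1$-weight of $u$ is its distance to $0$. An $(n,d,w)_3$ code is a set of ternary vectors of length $n$ each of $\ell_1$-weight $w$ with pairwise $\ell_1$-distance at least $d$ (here length $n'$ with positions indexed by $\mathbb Z_{n'}$). *)

From mathcomp Require Import all_boot all_order all_algebra.
Set Implicit Arguments. Unset Strict Implicit. Unset Printing Implicit Defensive.

Definition modular_golomb (m k : nat) (a : nat -> nat) : Prop :=
  (forall i j, i < k -> j < k -> i != j ->
     ~ ((a i)%:Z - (a j)%:Z = 0 %[mod m%:Z])%Z) /\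
  (forall i j i' j', i < k -> j < k -> i' < k -> j' < k -> i != j -> i' != j' ->
     ((a i)%:Z - (a j)%:Z = (a i')%:Z - (a j')%:Z %[mod m%:Z])%Z ->
     i = i' /\ j = j').

(* ternary vectors with positions indexed by Z_n (represented by 'I_n) *)
Definition tvec (n : nat) := {ffun 'I_n -> 'I_3}.

Definition two3 : 'I_3 := @Ordinal 3 2 isT.
Definition one3 : 'I_3 := @Ordinal 3 1 isT.
Definition zero3 : 'I_3 := @Ordinal 3 0 isT.

Definition mkvec (n : nat) (supp : seq nat) (p2 : nat) : tvec n :=
  [ffun v : 'I_n => if (v : nat) == p2 %% n then two3
                    else if has (fun x => x %% n == v) supp then one3 else zero3].

Definition l1dist (n : nat) (u v : tvec n) : nat :=
  \sum_(x : 'I_n) ((u x - v x) + (v x - u x))%N.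

Definition l1weight (n : nat) (u : tvec n) : nat := \sum_(x : 'I_n) (u x : nat).

Definition is_code (n d w : nat) (C : {set tvec n}) : Prop :=
  (forall c, c \in C -> l1weight c = w) /\
  (forall c c', c \in C -> c' \in C -> c != c' -> d <= l1dist c c').

Definition supp_count (n : nat) (C : {set tvec n}) (v : 'I_n) : nat :=
  #|[set c in C | c v != zero3]|.

Definition vecA (n w : nat) (a : nat -> nat) (i j : nat) : tvec n :=
  mkvec n [seq (a s + j) * (w - 1) + i | s <- iota 0 (w - 1)]
          ((a (w - 2) + j) * (w - 1) + i).

Definition vecB (n w t : nat) (i j : nat) : tvec n :=
  mkvec n [seq (s * i + j) * (w - 1) + (s - 1) | s <- iota 1 (w - 1)]
          (((t + i) * i + j) * (w - 1) + (t + i - 1)).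

Definition codeH (w t h : nat) (a : nat -> nat) : {set tvec (h * (w - 1))} :=
  [set vecA (h * (w - 1)) w a i j | i : 'I_(t - 1), j : 'I_h] :|:
  [set vecB (h * (w - 1)) w t i j | i : 'I_(w - t), j : 'I_h].

From mathcomp Require Import all_boot all_order all_algebra zify ring.
Import GRing.Theory.
Set Implicit Arguments. Unset Strict Implicit. Unset Printing Implicit Defensive.

(* Read a position v of Z_(h(w-1)) as the cell (v / (w-1), v mod (w-1)) of an
   h x (w-1) grid whose rows are taken in Z_h.  The support of a_{i,j} is the
   translate a + j of the Golomb ruler, placed in column i; b_{i,j} has one cell
   in each column s, in row (s+1) i + j, i.e. it is the line of slope i.  Each
   codeword is the indicator of its w - 1 support cells plus that of one doubled
   cell, so it has weight w.  Distinct codewords have distinct doubled cells and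
   supports meeting in at most one cell, hence l1-distance at least 2w - 2: two
   translates of a Golomb ruler share at most one point, a column meets a line
   once, and two lines whose slopes and abscissae are below w meet at most once
   because w^2 <= h.  For the counting, a cell lies on exactly one line of each
   of the w - t slopes and, if its column r is below t - 1, on exactly w - 1
   translates placed in column r, and on none otherwise. *)

Lemma sum_ord_count n (P : pred nat) : \sum_(x < n) (P x : nat) = count P (iota 0 n).
Proof.
by rewrite -sum1_count -[n in iota 0 n]subn0 -/(index_iota 0 n) big_mkord [RHS]big_mkcond.
Qed.

Lemma sum_ord_eq k r : \sum_(i < k) (i == r :> nat) = (r < k).
Proof.
by rewrite (sum_ord_count k (pred1 r)) count_uniq_mem ?iota_uniq ?mem_iota.
Qed.

Lemma sum_mem_map_uniq (T U : eqType) (f : T -> U) (l : seq T) (x : U) :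
  uniq (map f l) -> (x \in map f l : nat) = \sum_(s <- l) (f s == x).
Proof. by move=> u; rewrite -count_uniq_mem // count_map -sum1_count big_mkcond. Qed.

Lemma count_mem_iota n (S : seq nat) :
  uniq S -> (forall y, y \in S -> y < n) -> count (mem S) (iota 0 n) = size S.
Proof.
move=> uS ltS; rewrite -size_filter; apply/perm_size/uniq_perm => [||y].
- by rewrite filter_uniq ?iota_uniq.
- by [].
rewrite mem_filter mem_iota /=; case: (boolP (y \in S)) => // /ltS; lia.
Qed.

Lemma sum_translate_eq1 h c q : q < h -> \sum_(j < h) ((c + j) %% h == q : nat) = 1.
Proof.
move=> lt_q; have h_gt0 : 0 < h by case: h lt_q.
rewrite (sum_ord_count h (fun j => (c + j) %% h == q)).
rewrite -(count_map (fun j => (c + j) %% h) (pred1 q)).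
have uniq_tr : uniq [seq (c + j) %% h | j <- iota 0 h].
  rewrite map_inj_in_uniq ?iota_uniq // => j j'; rewrite !mem_iota /= => lt_j lt_j'.
  by move/eqP; rewrite eqn_modDl !modn_small //; move/eqP.
rewrite count_uniq_mem //.
have sub_tr : {subset [seq (c + j) %% h | j <- iota 0 h] <= iota 0 h}.
  by move=> _ /mapP [j _ ->]; rewrite mem_iota ltn_pmod.
have [_ eq_tr] := uniq_min_size uniq_tr sub_tr (eq_leq (esym (size_map _ _))).
by rewrite eq_tr mem_iota add0n lt_q.
Qed.

Lemma sum_modn W m (F : nat -> nat) :
  \sum_(0 <= v < m * W) F (v %% W) = m * \sum_(0 <= r < W) F r.
Proof.
rewrite big_nat_mul -[m in RHS]subn0 -sum_nat_const_nat; apply: eq_bigr => q _.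
rewrite -{1}[q * W]add0n big_addn mulSn addnK.
by apply: eq_big_nat => r /andP [_ lt_r]; rewrite addnC modnMDl modn_small.
Qed.

Lemma card_modn_ge m W c : c <= W ->
  #|[set v : 'I_(m * W) | c <= v %% W]| = m * (W - c).
Proof.
move=> le_cW.
have -> : #|[set v : 'I_(m * W) | c <= v %% W]| = \sum_(0 <= v < m * W) (c <= v %% W : nat).
  by rewrite big_mkord -sum1_card big_mkcond; apply: eq_bigr => v _; rewrite inE.
rewrite (sum_modn _ _ (fun r => c <= r : nat)) (big_cat_nat (leq0n c) le_cW) /=.
rewrite big1_seq => [|r]; last first.
  by rewrite mem_index_iota => /andP [_]; rewrite ltnNge => /negbTE ->.
rewrite add0n (eq_big_nat _ _ (F2 := fun=> 1)) => [|r /andP [-> //]].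
by rewrite sum_nat_const_nat muln1.
Qed.

Definition marked_support n (u : tvec n) (S : seq nat) (m : nat) :=
  forall x : 'I_n, (u x : nat) = (val x \in S) + (val x == m).

Lemma mkvec_marked n s p : p %% n \in map (modn^~ n) s ->
  marked_support (mkvec n s p) (map (modn^~ n) s) (p %% n).
Proof.
move=> p_in x; rewrite ffunE.
have -> : has (fun y => y %% n == x) s = (val x \in map (modn^~ n) s).
  by apply/hasP/mapP => [[y s_y /eqP E]|[y s_y E]]; exists y; rewrite // E.
by have [->|] := eqVneq (val x) (p %% n); rewrite ?p_in ?addn0 //; case: ifP.
Qed.

Section MarkedSupport.
Variables (n : nat) (u v : tvec n) (S T : seq nat) (m m' : nat).
Hypotheses (u_marked : marked_support u S m) (m_in_S : m \in S).

Lemma marked_support_neq0 x : (u x != zero3) = (val x \in S).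
Proof.
have -> : (u x != zero3) = ((u x : nat) != 0) by [].
rewrite u_marked; have [->|] := eqVneq (val x) m; rewrite ?m_in_S ?addn0 //.
by case: (_ \in _).
Qed.

Lemma l1weight_marked :
  uniq S -> (forall y, y \in S -> y < n) -> l1weight u = (size S).+1.
Proof.
move=> uniq_S lt_S; rewrite /l1weight (eq_bigr _ (fun x _ => u_marked x)) big_split /=.
rewrite (sum_ord_count n (mem S)) (sum_ord_count n (pred1 m)) count_mem_iota //.
by rewrite count_uniq_mem ?iota_uniq // mem_iota lt_S ?addn1.
Qed.

Lemma l1dist_add_min :
  l1dist u v + 2 * \sum_x minn (u x) (v x) = l1weight u + l1weight v.
Proof. by rewrite /l1dist /l1weight big_distrr -!big_split; apply: eq_bigr => x _ /=; lia. Qed.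

Lemma l1dist_marked : marked_support v T m' -> m' \in T -> m != m' ->
    (forall x y, x \in S -> x \in T -> y \in S -> y \in T -> x = y) ->
  l1weight u + l1weight v <= l1dist u v + 2.
Proof.
move=> v_marked m'_in_T neq_m meet1; rewrite -l1dist_add_min leq_add2l.
have min_le x : minn (u x) (v x) <= (val x \in S) && (val x \in T).
  rewrite u_marked v_marked; have [->|_] := eqVneq (val x) m.
    by rewrite m_in_S (negbTE neq_m); case: (m \in T).
  have [->|_] := eqVneq (val x) m'; first by rewrite m'_in_T; case: (m' \in S).
  by rewrite !addn0; case: (_ \in S); case: (_ \in T).
rewrite -[X in _ <= X]muln1 leq_pmul2l //.
apply: leq_trans (leq_sum _ (fun x _ => min_le x)) _.
have -> : \sum_(x : 'I_n) ((val x \in S) && (val x \in T) : nat) =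
          #|[pred x : 'I_n | (val x \in S) && (val x \in T)]|.
  by rewrite -sum1_card [RHS]big_mkcond.
apply/card_le1_eqP => x y /andP [x_S x_T] /andP [y_S y_T]; apply: val_inj; exact: meet1.
Qed.
End MarkedSupport.

Lemma eqn_mod_dvdz m x y : x = y %[mod m] -> (m%:Z %| (x%:Z - y%:Z)%R)%Z.
Proof. by move=> E; rewrite -eqz_mod_dvd !modz_nat E. Qed.

Section ModularGolombRuler.
Variables (m k : nat) (a : nat -> nat).
Hypothesis golomb_a : modular_golomb m k a.

Lemma golomb_modn_inj s s' : s < k -> s' < k -> a s = a s' %[mod m] -> s = s'.
Proof.
move=> lt_s lt_s' E; apply/eqP; apply: contraT => neq_s; exfalso.
case: golomb_a => /(_ s s' lt_s lt_s' neq_s) + _; apply.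
by apply/eqP; rewrite eqz_mod_dvd subr0; exact: eqn_mod_dvdz.
Qed.

Lemma golomb_translates_meet_once j j' s1 s2 s3 s4 :
  s1 < k -> s2 < k -> s3 < k -> s4 < k -> j != j' %[mod m] ->
  a s1 + j = a s2 + j' %[mod m] -> a s3 + j = a s4 + j' %[mod m] -> s1 = s3.
Proof.
move=> lt_s1 lt_s2 lt_s3 lt_s4 neq_j E12 E34.
have neq_s s s' : a s + j = a s' + j' %[mod m] -> s != s'.
  by move=> E; apply: contraTneq neq_j => eq_s; rewrite negbK -(eqn_modDl (a s)) E eq_s.
have cong : ((a s1)%:Z - (a s2)%:Z = (a s3)%:Z - (a s4)%:Z %[mod m%:Z])%Z.
  apply/eqP; rewrite eqz_mod_dvd.
  have -> : ((a s1)%:Z - (a s2)%:Z - ((a s3)%:Z - (a s4)%:Z) =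
            (a s1 + j)%:Z - (a s2 + j')%:Z - ((a s3 + j)%:Z - (a s4 + j')%:Z))%R.
    by rewrite !PoszD; ring.
  exact: rpredB (eqn_mod_dvdz E12) (eqn_mod_dvdz E34).
case: golomb_a => _ /(_ s1 s2 s3 s4 lt_s1 lt_s2 lt_s3 lt_s4).
by move=> /(_ (neq_s _ _ E12) (neq_s _ _ E34) cong) [].
Qed.

End ModularGolombRuler.

Lemma lines_meet_once h K s1 s3 i i' j j' : K * K <= h ->
  s1 < K -> s3 < K -> i < K -> i' < K ->
  s1 * i + j = s1 * i' + j' %[mod h] -> s3 * i + j = s3 * i' + j' %[mod h] ->
  s1 = s3 \/ i = i'.
Proof.
move=> le_h lt_s1 lt_s3 lt_i lt_i' E1 E3.
have := rpredB (eqn_mod_dvdz E1) (eqn_mod_dvdz E3).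
have -> : ((s1 * i + j)%:Z - (s1 * i' + j')%:Z - ((s3 * i + j)%:Z - (s3 * i' + j')%:Z) =
          (s1%:Z - s3%:Z) * (i%:Z - i'%:Z))%R by rewrite !PoszD !PoszM; ring.
rewrite {E1 E3} dvdzE abszM.
have [d1_0|d1_gt0] := posnP `|s1 - s3|; first by left; lia.
have [d2_0|d2_gt0] := posnP `|i - i'|; first by right; lia.
move/dvdn_leq; rewrite muln_gt0 d1_gt0 d2_gt0 => /(_ isT) le_hd.
have : `|s1 - s3| * `|i - i'| < K * K by apply: ltn_mul; lia.
lia.
Qed.

Section Cells.
Variables h W : nat.

Definition cell q r := (q %% h) * W + r.

Lemma eq_cell q r q' r' : r < W -> r' < W ->
  (cell q r == cell q' r') = (q == q' %[mod h]) && (r == r').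
Proof.
move=> lt_r lt_r'; apply/eqP/andP => [E|[/eqP Eq /eqP ->]]; last by rewrite /cell Eq.
have W_gt0 : 0 < W by case: W lt_r.
have := congr1 (modn^~ W) E; have := congr1 (divn^~ W) E.
rewrite /cell /= !modnMDl !divnMDl // (divn_small lt_r) (divn_small lt_r').
by rewrite (modn_small lt_r) (modn_small lt_r') !addn0 => -> ->.
Qed.

Lemma modn_cell q r : 0 < h -> r < W -> (q * W + r) %% (h * W) = cell q r.
Proof.
move=> h_gt0 lt_r.
rewrite /cell {1}(divn_eq q h) mulnDl -mulnA -addnA modnMDl modn_small //.
have := ltn_pmod q h_gt0; nia.
Qed.

Lemma cell_lt q r : 0 < h -> r < W -> cell q r < h * W.
Proof.
by move=> h_gt0 lt_r; rewrite -modn_cell // ltn_pmod // muln_gt0 h_gt0; case: W lt_r.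
Qed.

Lemma cell_divmod v : v < h * W -> cell (v %/ W) (v %% W) = v.
Proof.
move=> lt_v; have W_gt0 : 0 < W by move: lt_v; case: W; rewrite ?muln0.
by rewrite /cell modn_small -?divn_eq // ltn_divLR.
Qed.

Lemma eq_cell_pos q r v : r < W -> v < h * W ->
  (cell q r == v) = (q %% h == v %/ W) && (r == v %% W).
Proof.
move=> lt_r lt_v; have W_gt0 : 0 < W by case: W lt_r.
rewrite -{1}(cell_divmod lt_v) eq_cell ?ltn_pmod // [in X in _ == X]modn_small //.
by rewrite ltn_divLR.
Qed.

End Cells.

Section Construction.
Variables (w t h : nat) (a : nat -> nat).
Hypotheses (t_gt0 : 0 < t) (t_lt_w : t < w) (w_sq_le_h : w * w <= h)
           (golomb_a : modular_golomb h (w - 1) a).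

Local Notation W := (w - 1).
Local Notation cell := (cell h W).

Let W_gt0 : 0 < W. Proof. lia. Qed.
Let h_gt0 : 0 < h. Proof. nia. Qed.
Let colA (i : 'I_(t - 1)) : i < W. Proof. have := ltn_ord i; lia. Qed.
Let colB (i : 'I_(w - t)) : t + i - 1 < W. Proof. have := ltn_ord i; lia. Qed.

Definition codeword_index := ('I_(t - 1) * 'I_h + 'I_(w - t) * 'I_h)%type.

Definition codeword (p : codeword_index) : tvec (h * W) :=
  match p with
  | inl (i, j) => vecA (h * W) w a i j
  | inr (i, j) => vecB (h * W) w t i j
  end.

(* The index s of b_{i,j} in the paper is s.+1 here, so that s is the column. *)
Definition supp (p : codeword_index) : seq nat :=
  match p with
  | inl (i, j) => [seq cell (a s + j) i | s <- iota 0 W]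
  | inr (i, j) => [seq cell (s.+1 * i + j) s | s <- iota 0 W]
  end.

Definition mark (p : codeword_index) : nat :=
  match p with
  | inl (i, j) => cell (a (w - 2) + j) i
  | inr (i, j) => cell ((t + i) * i + j) (t + i - 1)
  end.

Lemma codeH_codeword : codeH w t h a = codeword @: setT.
Proof.
apply/setP => c; apply/setUP/imsetP => [[]|[[[i j]|[i j]] _ ->]].
- by case/imset2P => i j _ _ ->; exists (inl (i, j)).
- by case/imset2P => i j _ _ ->; exists (inr (i, j)).
- by left; apply: imset2_f.
- by right; apply: imset2_f.
Qed.

Lemma mark_in_supp p : mark p \in supp p.
Proof.
case: p => [[i j]|[i j]]; apply/mapP.
  by exists (w - 2); rewrite ?mem_iota //; lia.
exists (t + i - 1); first by rewrite mem_iota; have := colB i; lia.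
by have -> : (t + i - 1).+1 = t + i by lia.
Qed.

Lemma codeword_marked p : marked_support (codeword p) (supp p) (mark p).
Proof.
suff [s [m [-> Es Em]]] : exists s m, [/\ codeword p = mkvec (h * W) s m,
    map (modn^~ (h * W)) s = supp p & m %% (h * W) = mark p].
  by rewrite -Es -Em; apply: mkvec_marked; rewrite Es Em mark_in_supp.
case: p => [[i j]|[i j]]; do 2!eexists; split=> //.
- by rewrite -map_comp; apply: eq_map => s; rewrite /= modn_cell.
- by rewrite modn_cell.
- rewrite /= [iota 1 _](iotaDl 1 0) -!map_comp; apply/eq_in_map => s.
  by rewrite mem_iota => /andP [_ lt_s]; rewrite /= modn_cell ?add1n ?subSS ?subn0.
- by rewrite modn_cell.
Qed.

Lemma supp_uniq p : uniq (supp p).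
Proof.
case: p => [[i j]|[i j]]; rewrite map_inj_in_uniq ?iota_uniq // => s s'.
  rewrite !mem_iota => /andP [_ lt_s] /andP [_ lt_s'] /eqP.
  rewrite eq_cell // eqn_modDr => /andP [/eqP eq_a _].
  exact: (golomb_modn_inj golomb_a lt_s lt_s' eq_a).
rewrite !mem_iota => /andP [_ lt_s] /andP [_ lt_s'] /eqP.
by rewrite eq_cell // => /andP [_ /eqP].
Qed.

Lemma size_supp p : size (supp p) = W.
Proof. by case: p => [[i j]|[i j]]; rewrite size_map size_iota. Qed.

Lemma supp_lt p x : x \in supp p -> x < h * W.
Proof.
by case: p => [[i j]|[i j]] /mapP [s]; rewrite mem_iota => /andP [_ lt_s] ->; apply: cell_lt.
Qed.

Let translate_inj (j j' : 'I_h) c : c + j = c + j' %[mod h] -> j = j'.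
Proof. by move/eqP; rewrite eqn_modDl !modn_small // => /eqP /val_inj. Qed.

Lemma mark_inj : injective mark.
Proof.
case=> [[i j]|[i j]] [[i' j']|[i' j']] /= /eqP;
  rewrite eq_cell // => /andP [/eqP eq_q /eqP eq_r].
- by rewrite (val_inj eq_r) (translate_inj eq_q).
- by exfalso; have := ltn_ord i; lia.
- by exfalso; have := ltn_ord i'; lia.
have eq_i : i = i' by apply: val_inj => /=; lia.
by move: eq_q; rewrite eq_i => /translate_inj ->.
Qed.

Lemma mem_supp_inl i j x :
  x \in supp (inl (i, j)) -> exists2 s, s < W & x = cell (a s + j) i.
Proof. by case/mapP => s; rewrite mem_iota => /andP [_ lt_s] ->; exists s. Qed.

Lemma mem_supp_inr i j x :
  x \in supp (inr (i, j)) -> exists2 s, s < W & x = cell (s.+1 * i + j) s.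
Proof. by case/mapP => s; rewrite mem_iota => /andP [_ lt_s] ->; exists s. Qed.

Lemma supp_meet_inl i j i' j' x y : (i, j) != (i', j') ->
  x \in supp (inl (i, j)) -> x \in supp (inl (i', j')) ->
  y \in supp (inl (i, j)) -> y \in supp (inl (i', j')) -> x = y.
Proof.
move=> neq_p; case/mem_supp_inl => s1 lt_s1 ->; case/mem_supp_inl => s2 lt_s2 /eqP.
rewrite eq_cell // => /andP [/eqP E12 /eqP eq_i].
case/mem_supp_inl => s3 lt_s3 ->; case/mem_supp_inl => s4 lt_s4 /eqP.
rewrite eq_cell // => /andP [/eqP E34 _].
have neq_j : j != j' %[mod h].
  by rewrite !modn_small //; apply: contraNneq neq_p => /val_inj ->; rewrite (val_inj eq_i).
by rewrite (golomb_translates_meet_once golomb_a lt_s1 lt_s2 lt_s3 lt_s4 neq_j E12 E34).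
Qed.

Lemma supp_meet_inr i j i' j' x y : (i, j) != (i', j') ->
  x \in supp (inr (i, j)) -> x \in supp (inr (i', j')) ->
  y \in supp (inr (i, j)) -> y \in supp (inr (i', j')) -> x = y.
Proof.
move=> neq_p; case/mem_supp_inr => s1 lt_s1 ->; case/mem_supp_inr => s2 lt_s2 /eqP.
rewrite eq_cell // => /andP [/eqP E1 /eqP eq_s2]; rewrite -eq_s2 in E1.
case/mem_supp_inr => s3 lt_s3 ->; case/mem_supp_inr => s4 lt_s4 /eqP.
rewrite eq_cell // => /andP [/eqP E3 /eqP eq_s4]; rewrite -eq_s4 in E3.
have lt_w (k : 'I_(w - t)) : k < w by have := ltn_ord k; lia.
have lt_sw s : s < W -> s.+1 < w by lia.
have [[->] // | eq_i] :=
  lines_meet_once w_sq_le_h (lt_sw _ lt_s1) (lt_sw _ lt_s3) (lt_w i) (lt_w i') E1 E3.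
by move: E1 neq_p; rewrite eq_i => /translate_inj ->; rewrite (val_inj eq_i) eqxx.
Qed.

Lemma supp_meet_inl_inr i j i' j' x y :
  x \in supp (inl (i, j)) -> x \in supp (inr (i', j')) ->
  y \in supp (inl (i, j)) -> y \in supp (inr (i', j')) -> x = y.
Proof.
case/mem_supp_inl => s1 _ ->; case/mem_supp_inr => s2 lt_s2 /eqP.
rewrite eq_cell // => /andP [/eqP E1 /eqP eq_s2].
case/mem_supp_inl => s3 _ ->; case/mem_supp_inr => s4 lt_s4 /eqP.
rewrite eq_cell // => /andP [/eqP E3 /eqP eq_s4].
by apply/eqP; rewrite eq_cell // E1 E3 -eq_s2 -eq_s4 !eqxx.
Qed.

Lemma supp_meet p p' : p != p' -> forall x y,
  x \in supp p -> x \in supp p' -> y \in supp p -> y \in supp p' -> x = y.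
Proof.
case: p p' => [[i j]|[i j]] [[i' j']|[i' j']] neq_p x y.
- by apply: supp_meet_inl; apply: contraNneq neq_p => ->.
- exact: supp_meet_inl_inr.
- by move=> x_p x_p' y_p y_p'; exact: supp_meet_inl_inr x_p' x_p y_p' y_p.
- by apply: supp_meet_inr; apply: contraNneq neq_p => ->.
Qed.

Lemma codeword_inj : injective codeword.
Proof.
move=> p p' eq_c; apply: mark_inj.
have := codeword_marked p' (Ordinal (supp_lt (mark_in_supp p))).
rewrite -eq_c codeword_marked /= mark_in_supp eqxx.
by case: (mark p \in supp p'); case: eqP.
Qed.

Lemma l1weight_codeword p : l1weight (codeword p) = w.
Proof.
rewrite (l1weight_marked (codeword_marked p)) ?mark_in_supp ?supp_uniq ?size_supp //.
  lia.
exact: supp_lt.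
Qed.

Lemma is_code_codeH : is_code (2 * w - 2) w (codeH w t h a).
Proof.
rewrite codeH_codeword; split=> [_ /imsetP [p _ ->]|]; first exact: l1weight_codeword.
move=> _ _ /imsetP [p _ ->] /imsetP [p' _ ->] neq_c.
have neq_p : p != p' by apply: contraNneq neq_c => ->.
have := l1dist_marked (codeword_marked p) (mark_in_supp p) (codeword_marked p')
  (mark_in_supp p') (contra_neq (@mark_inj p p') neq_p) (supp_meet neq_p).
by rewrite !l1weight_codeword; lia.
Qed.

Lemma sum_mem_supp_inl (i : 'I_(t - 1)) v : v < h * W ->
  \sum_(j < h) (v \in supp (inl (i, j)) : nat) = (i == v %% W :> nat) * W.
Proof.
move=> lt_v; have lt_q : v %/ W < h by rewrite ltn_divLR.
under eq_bigr => j _ do rewrite (sum_mem_map_uniq _ (supp_uniq (inl (i, j)))).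
rewrite exchange_big /=.
under eq_bigr => s _ do under eq_bigr => j _ do rewrite eq_cell_pos //.
have [eq_i|neq_i] := eqVneq (i : nat) (v %% W).
  under eq_bigr => s _ do under eq_bigr => j _ do rewrite andbT.
  under eq_bigr => s _ do rewrite sum_translate_eq1 //.
  by rewrite sum1_size size_iota mul1n.
by rewrite big1 // => s _; rewrite big1 // => j _; rewrite andbF.
Qed.

Lemma sum_mem_supp_inr (i : 'I_(w - t)) v : v < h * W ->
  \sum_(j < h) (v \in supp (inr (i, j)) : nat) = 1.
Proof.
move=> lt_v; have lt_q : v %/ W < h by rewrite ltn_divLR.
under eq_bigr => j _ do rewrite (sum_mem_map_uniq _ (supp_uniq (inr (i, j)))).
rewrite exchange_big /=.
transitivity (\sum_(s <- iota 0 W) (s == v %% W : nat)).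
  apply: eq_big_seq => s; rewrite mem_iota => /andP [_ lt_s].
  under eq_bigr => j _ do rewrite eq_cell_pos //.
  have [_|_] := eqVneq s (v %% W); last by rewrite big1 // => j _; rewrite andbF.
  by under eq_bigr do rewrite andbT; exact: sum_translate_eq1.
by rewrite -(sum_mem_map_uniq (f := id)) map_id ?iota_uniq // mem_iota ltn_pmod.
Qed.

Lemma supp_count_codeH v :
  supp_count (codeH w t h a) v = (v %% W < t - 1) * W + (w - t).
Proof.
rewrite /supp_count codeH_codeword.
have -> : [set c in codeword @: setT | c v != zero3] = codeword @: [set p | val v \in supp p].
  have nz_p p : (codeword p v != zero3) = (val v \in supp p).
    exact: marked_support_neq0 (codeword_marked p) (mark_in_supp p) v.
  apply/setP => c; rewrite inE; apply/andP/imsetP => [[/imsetP [p _ ->]]|[p]].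
    by rewrite nz_p => v_p; exists p; rewrite ?inE.
  by rewrite inE => v_p ->; rewrite imset_f // nz_p.
rewrite card_imset; last exact: codeword_inj.
have -> : #|[set p | val v \in supp p]| =
    \sum_(i < t - 1) \sum_(j < h) (val v \in supp (inl (i, j)) : nat) +
    \sum_(i < w - t) \sum_(j < h) (val v \in supp (inr (i, j)) : nat).
  rewrite -sum1_card big_mkcond big_sumType !pair_bigA /=.
  by congr (_ + _); apply: eq_bigr => -[i j] _; rewrite inE.
rewrite (eq_bigr _ (fun i _ => sum_mem_supp_inl i (ltn_ord v))) -big_distrl sum_ord_eq.
rewrite (eq_bigr _ (fun i _ => sum_mem_supp_inr i (ltn_ord v))).
by rewrite sum_nat_const card_ord muln1.
Qed.

Lemma card_supp_count_eq :
  #|[set v : 'I_(h * W) | supp_count (codeH w t h a) v == w - t]| = h * (w - t).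
Proof.
have -> : [set v : 'I_(h * W) | supp_count (codeH w t h a) v == w - t] =
          [set v : 'I_(h * W) | t - 1 <= v %% W].
  by apply/setP => v; rewrite !inE supp_count_codeH; case: ltnP => /= _; lia.
by rewrite card_modn_ge; [congr (h * _) |]; lia.
Qed.

Lemma supp_count_codeH_neq v : supp_count (codeH w t h a) v != w - t ->
  supp_count (codeH w t h a) v = 2 * w - t - 1.
Proof. by rewrite supp_count_codeH; case: ltnP => /= _; lia. Qed.
End Construction.

Unset Implicit Arguments.

Theorem proposition1 (w t h : nat) (a : nat -> nat) :
  5 <= w -> 2 <= t -> t <= w - 2 -> 2 * w ^ 3 < h ->
  modular_golomb h (w - 1) a -> a 0 = 0 -> (forall s, s <= w - 2 -> a s < h) ->
  is_code (2 * w - 2) w (codeH w t h a) /\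
  #|[set v : 'I_(h * (w - 1)) | supp_count (codeH w t h a) v == w - t]| = h * (w - t) /\
  (forall v : 'I_(h * (w - 1)),
     supp_count (codeH w t h a) v != w - t ->
     supp_count (codeH w t h a) v = 2 * w - t - 1).
Proof.
move=> _ t_ge2 t_le h_gt golomb_a _ _.
have t_gt0 : 0 < t by lia.
have t_lt_w : t < w by lia.
have w_sq_le_h : w * w <= h.
  by apply: leq_trans (ltnW h_gt); rewrite expnS expnS expn1 mulnA leq_pmull; lia.
split; first exact: is_code_codeH.
split; first exact: card_supp_count_eq.
exact: supp_count_codeH_neq.
Qed.
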